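(* Let $A\in\mathbb{C}$, let $\sqrt{A}$ denote either square root of $A$, and let $|q|<1$. Define $F(A;q):=\sum_{n\geq0}\frac{q^{n^2}(A;q^2)_n}{(q^2;q^2)_n}$. Then $$F(A;q)=\frac12 (-q;q^2)_{\infty}\left[(-\sqrt{A};-q)_{\infty}+(\sqrt{A};-q)_{\infty}\right].$$
   Context: The $q$-Pochhammer symbol: $(a;q)_0=1$, $(a;q)_n=\prod_{j=0}^{n-1}(1-aq^j)$ for $n\ge1$, and $(a;q)_\infty=\prod_{j\ge0}(1-aq^j)$. *)

From Stdlib Require Import Reals.
From Coquelicot Require Import Coquelicot.

Open Scope C_scope.

Fixpoint qpoch (a q : C) (n : nat) : C :=
  match n with
  | O => 1
  | S m => qpoch a q m * (1 - a * q ^ m)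
  end.

Definition is_qpoch_inf (a q l : C) : Prop :=
  filterlim (fun n => qpoch a q n) eventually (locally l).

Definition F_term (A q : C) (n : nat) : C :=
  q ^ (n * n) * qpoch A (q ^ 2) n / qpoch (q ^ 2) (q ^ 2) n.

From Stdlib Require Import Reals Lra Lia Arith.
From Coquelicot Require Import Coquelicot.
Open Scope C_scope.

(* Write p = q^2 and c_k(x) = (-x)^k p^(k(k-1)/2).  The finite q-binomial theorem
   (x;p)_N = sum_k [N,k]_p c_k(x), with N -> oo under Tannery's theorem, gives Euler's
   expansion (x;p)_oo = sum_k c_k(x) / (p;p)_k.  In the truncation
   sum_n q^(n^2) [N,n]_p (A;p)_n of F, expanding (A;p)_n by the q-binomial theorem,
   exchanging the sums and resumming the inner one factors out (-q;p)_N, whence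
   F = (-q;p)_oo sum_k q^(k^2) c_k(A) / ((p;p)_k (-q;p)_k).  In the Euler expansions of
   (-sqrt A; -q)_oo and (sqrt A; -q)_oo the odd terms cancel, while the terms of index 2k
   are both equal to the k-th term of that last series. *)

Fixpoint fsum (f : nat -> C) (n : nat) : C :=
  match n with O => 0 | S m => fsum f m + f m end.

Fixpoint fsumR (f : nat -> R) (n : nat) : R :=
  match n with O => 0%R | S m => (fsumR f m + f m)%R end.

Lemma sum_n_fsum (a : nat -> C) n : sum_n a n = fsum a (S n).
Proof.
  induction n as [|n IH].
  - rewrite sum_O. simpl. ring.
  - rewrite sum_Sn, IH. reflexivity.
Qed.

Lemma sum_n_fsumR (a : nat -> R) n : sum_n a n = fsumR a (S n).
Proof.
  induction n as [|n IH].
  - rewrite sum_O. simpl. ring.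
  - rewrite sum_Sn, IH. reflexivity.
Qed.

Lemma fsum_ext f g n : (forall k, (k < n)%nat -> f k = g k) -> fsum f n = fsum g n.
Proof.
  induction n as [|n IH]; intros H; simpl; auto.
  rewrite IH, H by (auto with arith). reflexivity.
Qed.

Lemma fsum_plus f g n : fsum (fun k => f k + g k) n = fsum f n + fsum g n.
Proof. induction n as [|n IH]; simpl; [ring|rewrite IH; ring]. Qed.

Lemma fsum_mulr f c n : fsum (fun k => f k * c) n = fsum f n * c.
Proof. induction n as [|n IH]; simpl; [ring|rewrite IH; ring]. Qed.

Lemma fsum_mull f c n : fsum (fun k => c * f k) n = c * fsum f n.
Proof. induction n as [|n IH]; simpl; [ring|rewrite IH; ring]. Qed.

Lemma fsum_Sl f n : fsum f (S n) = f O + fsum (fun k => f (S k)) n.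
Proof. induction n as [|n IH]; simpl in *; [ring|rewrite IH; ring]. Qed.

Lemma fsum_sub_Cmod_le (f : nat -> C) (M : nat -> R) m n :
  (forall k, (Cmod (f k) <= M k)%R) -> (m <= n)%nat ->
  (Cmod (fsum f n - fsum f m) <= fsumR M n - fsumR M m)%R.
Proof.
  intros HM Hmn. induction Hmn as [|n _ IH]; simpl.
  - replace (fsum f m - fsum f m) with (RtoC 0) by ring. rewrite Cmod_0. lra.
  - replace (fsum f n + f n - fsum f m) with ((fsum f n - fsum f m) + f n) by ring.
    eapply Rle_trans; [apply Cmod_triangle|]. specialize (HM n). lra.
Qed.

Lemma fsum_triangle (f : nat -> nat -> C) N :
  fsum (fun n => fsum (f n) (S n)) (S N) =
  fsum (fun k => fsum (fun m => f (k + m)%nat k) (S (N - k))) (S N).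
Proof.
  induction N as [|N IH].
  - simpl. ring.
  - change (fsum (fun n => fsum (f n) (S n)) (S (S N))) with
      (fsum (fun n => fsum (f n) (S n)) (S N) + (fsum (f (S N)) (S N) + f (S N) (S N))).
    rewrite IH.
    change (fsum (fun k => fsum (fun m => f (k + m)%nat k) (S (S N - k))) (S (S N))) with
      (fsum (fun k => fsum (fun m => f (k + m)%nat k) (S (S N - k))) (S N) +
       fsum (fun m => f (S N + m)%nat (S N)) (S (S N - S N))).
    rewrite (fsum_ext (fun k => fsum (fun m => f (k + m)%nat k) (S (S N - k)))
       (fun k => fsum (fun m => f (k + m)%nat k) (S (N - k)) + f (S N) k)).
    2:{ intros k Hk. replace (S N - k)%nat with (S (N - k)) by lia. simpl.
        replace (k + S (N - k))%nat with (S N) by lia. reflexivity. }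
    rewrite fsum_plus, Nat.sub_diag. simpl. rewrite Nat.add_0_r. ring.
Qed.

Definition Clim (u : nat -> C) (l : C) : Prop :=
  forall eps : R, (0 < eps)%R ->
    exists N, forall n, (N <= n)%nat -> (Cmod (u n - l) < eps)%R.

Lemma Clim_filterlim (u : nat -> C) (l : C) :
  Clim u l <-> filterlim u eventually (locally l).
Proof.
  rewrite (filterlim_locally_ball_norm (K:=C_AbsRing) (U:=C_NormedModule)).
  split.
  - intros H eps. destruct (H eps (cond_pos eps)) as [N HN].
    exists N. intros n Hn. apply HN. lia.
  - intros H eps Heps. destruct (H (mkposreal eps Heps)) as [N HN].
    exists N. exact HN.
Qed.

Lemma Clim_ext u v l : (forall n, u n = v n) -> Clim u l -> Clim v l.
Proof.
  intros E H eps Heps. destruct (H eps Heps) as [N HN].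
  exists N. intros n Hn. rewrite <- E. auto.
Qed.

Lemma Clim_unique u l1 l2 : Clim u l1 -> Clim u l2 -> l1 = l2.
Proof.
  rewrite !Clim_filterlim.
  exact (filterlim_locally_unique (K:=C_AbsRing) (V:=C_NormedModule) u l1 l2).
Qed.

Lemma Clim_reindex u l (g : nat -> nat) :
  (forall M, exists N, forall n, (N <= n)%nat -> (M <= g n)%nat) ->
  Clim u l -> Clim (fun n => u (g n)) l.
Proof.
  intros Hg H eps Heps. destruct (H eps Heps) as [M HM]. destruct (Hg M) as [N HN].
  exists N. intros n Hn. apply HM, HN, Hn.
Qed.

Lemma is_series_Clim (a : nat -> C) l : is_series a l <-> Clim (fsum a) l.
Proof.
  unfold is_series. rewrite <- Clim_filterlim. split; intros H eps Heps;
    destruct (H eps Heps) as [N HN].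
  - exists (S N). intros [|n] Hn; [lia|]. rewrite <- sum_n_fsum. apply HN. lia.
  - exists N. intros n Hn. rewrite sum_n_fsum. apply HN. lia.
Qed.

Lemma is_series_fsumR (a : nat -> R) l : is_series a l ->
  forall eps, (0 < eps)%R -> exists N, forall n, (N <= n)%nat -> (Rabs (fsumR a n - l) < eps)%R.
Proof.
  intros H eps Heps.
  destruct (proj1 (filterlim_locally_ball_norm (K:=R_AbsRing) (U:=R_NormedModule) (sum_n a) l) H
    (mkposreal eps Heps)) as [N HN].
  exists (S N). intros [|n] Hn; [lia|]. rewrite <- sum_n_fsumR. apply HN. lia.
Qed.

Lemma Clim_const c : Clim (fun _ => c) c.
Proof.
  intros eps Heps. exists O. intros.
  replace (c - c) with (RtoC 0) by ring. rewrite Cmod_0. lra.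
Qed.

Lemma Clim_plus u v l m : Clim u l -> Clim v m -> Clim (fun n => u n + v n) (l + m).
Proof.
  intros Hu Hv eps Heps.
  destruct (Hu (eps / 2)%R ltac:(lra)) as [N1 H1]. destruct (Hv (eps / 2)%R ltac:(lra)) as [N2 H2].
  exists (N1 + N2)%nat. intros n Hn.
  replace (u n + v n - (l + m)) with ((u n - l) + (v n - m)) by ring.
  eapply Rle_lt_trans; [apply Cmod_triangle|].
  specialize (H1 n ltac:(lia)). specialize (H2 n ltac:(lia)). lra.
Qed.

Lemma Clim_bounded u l : Clim u l -> exists B, (0 < B)%R /\ forall n, (Cmod (u n) <= B)%R.
Proof.
  intros H. destruct (H 1%R Rlt_0_1) as [N HN].
  assert (Hhead : exists B0, (0 <= B0)%R /\ forall n, (n < N)%nat -> (Cmod (u n) <= B0)%R).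
  { clear HN. induction N as [|N [B0 [HB0 HB]]].
    - exists 0%R. split; [lra | intros; lia].
    - exists (Rmax B0 (Cmod (u N))). split.
      + eapply Rle_trans; [exact HB0|apply Rmax_l].
      + intros n Hn. destruct (Nat.eq_dec n N) as [->|].
        * apply Rmax_r.
        * eapply Rle_trans; [apply HB; lia|apply Rmax_l]. }
  destruct Hhead as [B0 [HB0 HB]].
  exists (B0 + Cmod l + 1)%R. pose proof (Cmod_ge_0 l). split; [lra|].
  intros n. destruct (le_lt_dec N n) as [h|h].
  - specialize (HN n h). pose proof (Cmod_triangle (u n - l) l).
    replace (u n - l + l) with (u n) in H1 by ring. lra.
  - specialize (HB n h). lra.
Qed.

Lemma Clim_mult u v l m : Clim u l -> Clim v m -> Clim (fun n => u n * v n) (l * m).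
Proof.
  intros Hu Hv. destruct (Clim_bounded u l Hu) as [B [HB0 HB]].
  intros eps Heps. pose proof (Cmod_ge_0 m) as Hm.
  set (e1 := (eps / (2 * (Cmod m + 1)))%R).
  set (e2 := (eps / (2 * B))%R).
  assert (He1 : (0 < e1)%R) by (unfold e1; apply Rdiv_lt_0_compat; lra).
  assert (He2 : (0 < e2)%R) by (unfold e2; apply Rdiv_lt_0_compat; lra).
  destruct (Hu e1 He1) as [N1 H1]. destruct (Hv e2 He2) as [N2 H2].
  exists (N1 + N2)%nat. intros n Hn.
  specialize (H1 n ltac:(lia)). specialize (H2 n ltac:(lia)). specialize (HB n).
  replace (u n * v n - l * m) with (u n * (v n - m) + (u n - l) * m) by ring.
  eapply Rle_lt_trans; [apply Cmod_triangle|]. rewrite !Cmod_mult.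
  assert (Cmod (u n) * Cmod (v n - m) <= B * e2)%R
    by (apply Rmult_le_compat; try apply Cmod_ge_0; lra).
  assert (Cmod (u n - l) * Cmod m < e1 * (Cmod m + 1))%R.
  { apply Rle_lt_trans with (e1 * Cmod m)%R.
    - apply Rmult_le_compat_r; lra.
    - apply Rmult_lt_compat_l; lra. }
  assert (B * e2 = eps / 2)%R by (unfold e2; field; lra).
  assert (e1 * (Cmod m + 1) = eps / 2)%R by (unfold e1; field; lra).
  lra.
Qed.

Lemma Clim_scal c u l : Clim u l -> Clim (fun n => c * u n) (c * l).
Proof. intros H. apply Clim_mult; [apply Clim_const | exact H]. Qed.

Lemma Clim_pow_0 p : (Cmod p < 1)%R -> Clim (fun n => p ^ n) 0.
Proof.
  intros Hp eps Heps.
  assert (Hp' : (Rabs (Cmod p) < 1)%R) by (rewrite Rabs_pos_eq; auto; apply Cmod_ge_0).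
  destruct (pow_lt_1_zero (Cmod p) Hp' eps Heps) as [N HN]. exists N. intros n Hn.
  replace (p ^ n - 0) with (p ^ n) by ring. rewrite Cmod_pow.
  specialize (HN n Hn). rewrite Rabs_pos_eq in HN; auto. apply pow_le, Cmod_ge_0.
Qed.

Lemma Clim_Cmod_le u l B : Clim u l -> (forall n, (Cmod (u n) <= B)%R) -> (Cmod l <= B)%R.
Proof.
  intros H HB. destruct (Rle_lt_dec (Cmod l) B) as [h|h]; auto.
  destruct (H (Cmod l - B)%R ltac:(lra)) as [N HN]. specialize (HN N (le_n _)).
  specialize (HB N). pose proof (Cmod_triangle (l - u N) (u N)).
  replace (l - u N + u N) with l in H0 by ring.
  replace (l - u N) with (- (u N - l)) in H0 by ring. rewrite Cmod_opp in H0. lra.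
Qed.

Lemma Clim_fsum (a : nat -> nat -> C) (b : nat -> C) K :
  (forall k, Clim (fun N => a N k) (b k)) -> Clim (fun N => fsum (a N) K) (fsum b K).
Proof.
  intros H. induction K as [|K IH]; simpl.
  - apply Clim_const.
  - apply Clim_plus; auto.
Qed.

Lemma tannery (a : nat -> nat -> C) (b : nat -> C) (M : nat -> R) :
  (forall k, Clim (fun N => a N k) (b k)) ->
  (forall N k, (Cmod (a N k) <= M k)%R) -> ex_series M ->
  exists L, is_series b L /\ Clim (fun N => fsum (a N) (S N)) L.
Proof.
  intros Hlim Hbd [SM HSM].
  assert (Hb : forall k, (Cmod (b k) <= M k)%R).
  { intros k. apply (Clim_Cmod_le (fun N => a N k)); auto. }
  destruct (ex_series_le (K:=C_AbsRing) (V:=C_CompleteNormedModule) b M Hb (ex_intro _ SM HSM))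
    as [L HL].
  exists L. split; [exact HL|]. apply is_series_Clim in HL.
  intros eps Heps.
  destruct (is_series_fsumR M SM HSM (eps / 8)%R ltac:(lra)) as [K HK].
  destruct (Clim_fsum a b K Hlim (eps / 4)%R ltac:(lra)) as [N1 HN1].
  exists (N1 + K)%nat. intros N HN.
  destruct (HL (eps / 4)%R ltac:(lra)) as [N2 HN2].
  set (n := (N2 + S N + K)%nat).
  (* head of [a N] close to head of [b], both tails beyond [K] bounded by the tail of [M] *)
  pose proof (HN1 N ltac:(lia)) as Hhead.
  pose proof (fsum_sub_Cmod_le (a N) M K (S N) (Hbd N) ltac:(lia)) as Hatail.
  pose proof (fsum_sub_Cmod_le b M K n Hb ltac:(unfold n; lia)) as Hbtail.
  pose proof (HN2 n ltac:(unfold n; lia)) as Hbn.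
  pose proof (HK K (le_n _)) as HK0. pose proof (HK (S N) ltac:(lia)) as HK1.
  pose proof (HK n ltac:(unfold n; lia)) as HK2.
  apply Rabs_def2 in HK0. apply Rabs_def2 in HK1. apply Rabs_def2 in HK2.
  replace (fsum (a N) (S N) - L) with
    ((fsum (a N) K - fsum b K) + (fsum (a N) (S N) - fsum (a N) K)
     + (- (fsum b n - fsum b K) + (fsum b n - L))) by ring.
  eapply Rle_lt_trans; [apply Cmod_triangle|].
  pose proof (Cmod_triangle (fsum (a N) K - fsum b K) (fsum (a N) (S N) - fsum (a N) K))
    as Htri1.
  pose proof (Cmod_triangle (- (fsum b n - fsum b K)) (fsum b n - L)) as Htri2.
  rewrite Cmod_opp in Htri2. lra.
Qed.

Lemma ex_series_Cmod_ratio (u : nat -> C) (c rho : R) :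
  (0 <= c)%R -> (0 <= rho < 1)%R ->
  (forall k, (Cmod (u (S k)) <= c * rho ^ k * Cmod (u k))%R) ->
  ex_series (fun k => Cmod (u k)).
Proof.
  intros Hc Hr Hu.
  assert (Hr' : (Rabs rho < 1)%R) by (rewrite Rabs_pos_eq; lra).
  destruct (pow_lt_1_zero rho Hr' (/ (2 * (c + 1)))%R) as [N HN].
  { apply Rinv_0_lt_compat. lra. }
  assert (Hhalf : forall n, (N <= n)%nat -> (c * rho ^ n <= / 2)%R).
  { intros n Hn. specialize (HN n Hn). rewrite Rabs_pos_eq in HN by (apply pow_le; lra).
    apply Rle_trans with (c * / (2 * (c + 1)))%R; [apply Rmult_le_compat_l; lra|].
    apply Rmult_le_reg_l with (2 * (c + 1))%R; [lra|]. field_simplify; lra. }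
  assert (Hgeom : forall k, (Cmod (u (N + k)%nat) <= Cmod (u N) * (/ 2) ^ k)%R).
  { induction k as [|k IH].
    - rewrite Nat.add_0_r. simpl. lra.
    - rewrite Nat.add_succ_r. eapply Rle_trans; [apply Hu|].
      specialize (Hhalf (N + k)%nat ltac:(lia)). pose proof (Cmod_ge_0 (u (N + k)%nat)).
      apply Rle_trans with (/ 2 * Cmod (u (N + k)%nat))%R.
      + apply Rmult_le_compat_r; lra.
      + simpl. pose proof (Cmod_ge_0 (u N)). nra. }
  apply (ex_series_incr_n (K:=R_AbsRing) (V:=R_NormedModule) _ N).
  apply (ex_series_le (K:=R_AbsRing) (V:=R_CompleteNormedModule) _
    (fun k => Cmod (u N) * (/ 2) ^ k)%R).
  - intros n. change (Rabs (Cmod (u (N + n)%nat)) <= Cmod (u N) * (/ 2) ^ n)%R.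
    rewrite Rabs_pos_eq by apply Cmod_ge_0. apply Hgeom.
  - apply (ex_series_scal_l (K:=R_AbsRing) (V:=R_NormedModule) (Cmod (u N)) (fun k => (/ 2) ^ k)%R).
    apply ex_series_geom. rewrite Rabs_pos_eq; lra.
Qed.

Lemma fsumR_geom_le r n : (0 <= r < 1)%R -> (fsumR (fun i => r ^ i)%R n <= / (1 - r))%R.
Proof.
  intros Hr.
  assert (Hsum : fsumR (fun i => r ^ i)%R n = ((1 - r ^ n) / (1 - r))%R).
  { induction n as [|n IH]; simpl; [field; lra|]. rewrite IH. field. lra. }
  rewrite Hsum. unfold Rdiv. rewrite <- (Rmult_1_l (/ (1 - r))) at 2.
  apply Rmult_le_compat_r.
  - apply Rlt_le, Rinv_0_lt_compat. lra.
  - pose proof (pow_le r n ltac:(lra)). lra.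
Qed.

Lemma exp_le_compat x y : (x <= y)%R -> (exp x <= exp y)%R.
Proof. intros [h | ->]; [apply Rlt_le, exp_increasing, h | lra]. Qed.

Lemma qpoch_Cmod_le_exp x p n :
  (Cmod (qpoch x p n) <= exp (Cmod x * fsumR (fun i => Cmod p ^ i)%R n))%R.
Proof.
  induction n as [|n IH]; simpl.
  - rewrite Rmult_0_r, exp_0, Cmod_1. lra.
  - rewrite Cmod_mult, Rmult_plus_distr_l, exp_plus.
    apply Rmult_le_compat; try apply Cmod_ge_0; auto.
    eapply Rle_trans; [|apply exp_ineq1_le].
    unfold Cminus. eapply Rle_trans; [apply Cmod_triangle|].
    rewrite Cmod_opp, Cmod_1, Cmod_mult, Cmod_pow. lra.
Qed.

Lemma qpoch_bounded x p : (Cmod p < 1)%R ->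
  exists B, forall n, (Cmod (qpoch x p n) <= B)%R.
Proof.
  intros Hp. exists (exp (Cmod x / (1 - Cmod p))). intros n.
  eapply Rle_trans; [apply qpoch_Cmod_le_exp|]. apply exp_le_compat.
  unfold Rdiv. apply Rmult_le_compat_l; [apply Cmod_ge_0|].
  apply fsumR_geom_le. pose proof (Cmod_ge_0 p). lra.
Qed.

(* From [1 <= (1 + s)(1 - t)] for [s = t / (1 - c)], and [exp s >= 1 + s]. *)
Lemma exp_neg_le_1_sub t c : (0 <= t <= c)%R -> (c < 1)%R ->
  (exp (- (t / (1 - c))) <= 1 - t)%R.
Proof.
  intros Ht Hc. rewrite exp_Ropp.
  pose proof (exp_ineq1_le (t / (1 - c))). pose proof (exp_pos (t / (1 - c))).
  assert (1 <= (1 + t / (1 - c)) * (1 - t))%R.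
  { assert (t / (1 - c) * (1 - c) = t)%R by (field; lra).
    assert (0 <= t / (1 - c))%R by (apply Rdiv_le_0_compat; lra).
    nra. }
  apply Rmult_le_reg_l with (exp (t / (1 - c))); auto.
  rewrite Rinv_r by lra. nra.
Qed.

Lemma qpoch_Cmod_ge_exp x p n : (Cmod x < 1)%R -> (Cmod p <= 1)%R ->
  (exp (- (Cmod x / (1 - Cmod x) * fsumR (fun i => Cmod p ^ i)%R n)) <= Cmod (qpoch x p n))%R.
Proof.
  intros Hx Hp. pose proof (Cmod_ge_0 x). pose proof (Cmod_ge_0 p).
  induction n as [|n IH]; simpl.
  - rewrite Rmult_0_r, Ropp_0, exp_0, Cmod_1. lra.
  - rewrite Cmod_mult, Rmult_plus_distr_l, Ropp_plus_distr, exp_plus.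
    apply Rmult_le_compat; try (apply Rlt_le, exp_pos); auto.
    apply Rle_trans with (1 - Cmod x * Cmod p ^ n)%R.
    + replace (Cmod x / (1 - Cmod x) * Cmod p ^ n)%R
        with ((Cmod x * Cmod p ^ n) / (1 - Cmod x))%R by (field; lra).
      apply exp_neg_le_1_sub; auto.
      pose proof (pow_le (Cmod p) n ltac:(lra)).
      assert (Cmod p ^ n <= 1)%R by (rewrite <- (pow1 n); apply pow_incr; lra). nra.
    + pose proof (Cmod_triangle (1 - x * p ^ n) (x * p ^ n)).
      replace (1 - x * p ^ n + x * p ^ n) with (RtoC 1) in H1 by ring.
      rewrite Cmod_1, Cmod_mult, Cmod_pow in H1. lra.
Qed.

Lemma qpoch_bounded_below x p : (Cmod x < 1)%R -> (Cmod p < 1)%R ->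
  exists c, (0 < c)%R /\ forall n, (c <= Cmod (qpoch x p n))%R.
Proof.
  intros Hx Hp. exists (exp (- (Cmod x / (1 - Cmod x) / (1 - Cmod p)))).
  split; [apply exp_pos|]. intros n.
  eapply Rle_trans; [|apply qpoch_Cmod_ge_exp; lra]. apply exp_le_compat.
  apply Ropp_le_contravar. unfold Rdiv at 2. apply Rmult_le_compat_l.
  - pose proof (Cmod_ge_0 x). apply Rdiv_le_0_compat; lra.
  - apply fsumR_geom_le. pose proof (Cmod_ge_0 p). lra.
Qed.

Lemma qpoch_neq0 x p n : (Cmod x < 1)%R -> (Cmod p < 1)%R -> qpoch x p n <> 0.
Proof.
  intros Hx Hp E. destruct (qpoch_bounded_below x p Hx Hp) as [c [Hc Hlow]].
  specialize (Hlow n). rewrite E, Cmod_0 in Hlow. lra.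
Qed.

(* [euler_coef x p k = (-x)^k p^(k(k-1)/2)] *)
Fixpoint euler_coef (x p : C) (k : nat) : C :=
  match k with O => 1 | S m => euler_coef x p m * (- x * p ^ m) end.

(* [qfall p N k = (1 - p^N) (1 - p^(N-1)) ... (1 - p^(N-k+1))]; for [k > N] the truncated
   subtraction produces the factor [1 - p^0 = 0], as it should. *)
Fixpoint qfall (p : C) (N k : nat) : C :=
  match k with O => 1 | S m => qfall p N m * (1 - p ^ (N - m)) end.

Definition qbin (p : C) (N k : nat) : C := qfall p N k / qpoch p p k.

Lemma qfall_S p N k : qfall p (S N) (S k) = (1 - p ^ (S N)) * qfall p N k.
Proof.
  induction k as [|k IH].
  - simpl. ring.
  - change (qfall p (S N) (S (S k))) with (qfall p (S N) (S k) * (1 - p ^ (S N - S k))).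
    rewrite IH. simpl. ring.
Qed.

Lemma qfall_gt p N k : (N < k)%nat -> qfall p N k = 0.
Proof.
  intros H. induction k as [|k IH]; [lia|].
  destruct (Nat.eq_dec k N) as [->|].
  - simpl. rewrite Nat.sub_diag. simpl. ring.
  - simpl. rewrite IH by lia. ring.
Qed.

Lemma qfall_mul_qpoch p N k : (k <= N)%nat -> qfall p N k * qpoch p p (N - k) = qpoch p p N.
Proof.
  induction k as [|k IH]; intros H.
  - simpl. rewrite Nat.sub_0_r. ring.
  - specialize (IH ltac:(lia)). replace (N - k)%nat with (S (N - S k)) in IH by lia.
    simpl in IH. rewrite <- IH. simpl.
    replace (N - k)%nat with (S (N - S k)) by lia. simpl. ring.
Qed.

Lemma qbin_0 p N : qbin p N 0 = 1.
Proof. unfold qbin. simpl. field. Qed.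

Lemma qbin_gt p N k : (N < k)%nat -> qbin p N k = 0.
Proof. intros. unfold qbin. rewrite qfall_gt by auto. unfold Cdiv. ring. Qed.

Lemma qbin_factorial p N k : (Cmod p < 1)%R -> (k <= N)%nat ->
  qbin p N k = qpoch p p N / (qpoch p p k * qpoch p p (N - k)).
Proof.
  intros Hp Hk. unfold qbin. rewrite <- (qfall_mul_qpoch p N k Hk).
  field. split; apply qpoch_neq0; auto.
Qed.

Lemma qbin_pascal p N k : (Cmod p < 1)%R -> (k <= N)%nat ->
  qbin p (S N) (S k) = qbin p N (S k) + p ^ (N - k) * qbin p N k.
Proof.
  intros Hp Hk. unfold qbin. rewrite qfall_S. simpl.
  replace (p ^ N) with (p ^ (N - k) * p ^ k) by (rewrite <- Cpow_add_r; f_equal; lia).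
  pose proof (qpoch_neq0 p p (S k) Hp Hp) as Hnz. simpl in Hnz.
  field. split; intro h; apply Hnz; rewrite h; ring.
Qed.

Lemma qpoch_qbinomial x p N : (Cmod p < 1)%R ->
  qpoch x p N = fsum (fun k => qbin p N k * euler_coef x p k) (S N).
Proof.
  intros Hp. induction N as [|N IH].
  - simpl. rewrite qbin_0. ring.
  - change (qpoch x p (S N)) with (qpoch x p N * (1 - x * p ^ N)).
    rewrite IH, (fsum_Sl (fun k => qbin p (S N) k * euler_coef x p k) (S N)), qbin_0.
    rewrite (fsum_ext (fun k => qbin p (S N) (S k) * euler_coef x p (S k))
      (fun k => qbin p N (S k) * euler_coef x p (S k)
                + qbin p N k * euler_coef x p k * (- x * p ^ N))).
    2:{ intros k Hk. rewrite qbin_pascal by (auto; lia). simpl.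
        replace (p ^ N) with (p ^ (N - k) * p ^ k) by (rewrite <- Cpow_add_r; f_equal; lia).
        ring. }
    rewrite fsum_plus, fsum_mulr.
    assert (Hshift : fsum (fun k => qbin p N (S k) * euler_coef x p (S k)) (S N) =
      fsum (fun k => qbin p N k * euler_coef x p k) (S N) - 1).
    { pose proof (fsum_Sl (fun k => qbin p N k * euler_coef x p k) (S N)) as H.
      change (fsum ?f (S (S N))) with (fsum f (S N) + f (S N)) in H. cbv beta in H.
      rewrite qbin_gt, qbin_0, Cmult_0_l, Cplus_0_r in H by lia. rewrite H. simpl. ring. }
    rewrite Hshift. simpl. ring.
Qed.

Lemma qbin_bounded p : (Cmod p < 1)%R ->
  exists B, (0 <= B)%R /\ forall N k, (Cmod (qbin p N k) <= B)%R.
Proof.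
  intros Hp.
  destruct (qpoch_bounded p p Hp) as [U HU].
  destruct (qpoch_bounded_below p p Hp Hp) as [c [Hc Hlow]].
  exists (U / c / c)%R.
  assert (HB0 : (0 <= U / c / c)%R).
  { pose proof (Rle_trans _ _ _ (Cmod_ge_0 _) (HU O)).
    apply Rdiv_le_0_compat; [apply Rdiv_le_0_compat|]; lra. }
  split; [exact HB0|]. intros N k.
  destruct (le_lt_dec k N) as [h|h]; [|rewrite qbin_gt, Cmod_0 by auto; exact HB0].
  rewrite qbin_factorial by auto.
  rewrite Cmod_div by (apply Cmult_neq_0; apply qpoch_neq0; auto).
  rewrite Cmod_mult. unfold Rdiv. rewrite Rinv_mult, <- Rmult_assoc.
  pose proof (Hlow k). pose proof (Hlow (N - k)%nat).
  assert (Hinv : forall x, (c <= x)%R -> (0 <= / x <= / c)%R).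
  { intros x Hx. split; [apply Rlt_le, Rinv_0_lt_compat; lra | apply Rinv_le_contravar; auto]. }
  destruct (Hinv _ H) as [Hk1 Hk2]. destruct (Hinv _ H0) as [HNk1 HNk2].
  apply Rmult_le_compat; auto.
  - apply Rmult_le_pos; [apply Cmod_ge_0 | exact Hk1].
  - apply Rmult_le_compat; [apply Cmod_ge_0 | exact Hk1 | apply HU | exact Hk2].
Qed.

Lemma qfall_lim p k : (Cmod p < 1)%R -> Clim (fun N => qfall p N k) 1.
Proof.
  intros Hp. induction k as [|k IH].
  - exact (Clim_const 1).
  - replace (RtoC 1) with (1 * (1 + (-1) * 0)) by ring.
    apply Clim_mult; [exact IH|].
    apply (Clim_ext (fun N => 1 + (-1) * p ^ (N - k))); [intros; ring|].
    apply Clim_plus; [apply Clim_const|]. apply Clim_scal.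
    apply (Clim_reindex (fun n => p ^ n)); [|apply Clim_pow_0; auto].
    intros M. exists (M + k)%nat. intros. lia.
Qed.

Lemma qbin_lim p k : (Cmod p < 1)%R -> Clim (fun N => qbin p N k) (/ qpoch p p k).
Proof.
  intros Hp. replace (/ qpoch p p k) with (1 * / qpoch p p k) by ring.
  apply Clim_mult; [apply qfall_lim; auto | apply Clim_const].
Qed.

Lemma ex_series_euler_coef x p : (Cmod p < 1)%R -> ex_series (fun k => Cmod (euler_coef x p k)).
Proof.
  intros Hp. pose proof (Cmod_ge_0 p).
  apply (ex_series_Cmod_ratio _ (Cmod x) (Cmod p)); [apply Cmod_ge_0 | lra|].
  intros k. simpl. rewrite !Cmod_mult, Cmod_opp, Cmod_pow. lra.
Qed.

Lemma qpoch_euler x p : (Cmod p < 1)%R ->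
  exists P, Clim (qpoch x p) P /\ is_series (fun k => euler_coef x p k / qpoch p p k) P.
Proof.
  intros Hp. destruct (qbin_bounded p Hp) as [B [HB0 HB]].
  destruct (tannery (fun N k => qbin p N k * euler_coef x p k) (fun k => euler_coef x p k / qpoch p p k)
      (fun k => B * Cmod (euler_coef x p k))%R) as [L [HL HlimL]].
  - intros k. replace (euler_coef x p k / qpoch p p k) with (/ qpoch p p k * euler_coef x p k)
      by (unfold Cdiv; ring).
    apply Clim_mult; [apply qbin_lim; auto | apply Clim_const].
  - intros N k. rewrite Cmod_mult. apply Rmult_le_compat_r; [apply Cmod_ge_0 | apply HB].
  - apply (ex_series_scal_l (K:=R_AbsRing) (V:=R_NormedModule)). apply ex_series_euler_coef; auto.
  - exists L. split; auto.
    apply (Clim_ext (fun N => fsum (fun k => qbin p N k * euler_coef x p k) (S N))); auto.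
    intros N. rewrite qpoch_qbinomial by auto. reflexivity.
Qed.

Lemma qbin_mul p N k m : (Cmod p < 1)%R -> (k + m <= N)%nat ->
  qbin p N (k + m) * qbin p (k + m) k = qbin p N k * qbin p (N - k) m.
Proof.
  intros Hp H. rewrite !qbin_factorial by (auto; lia).
  replace (k + m - k)%nat with m by lia.
  replace (N - k - m)%nat with (N - (k + m))%nat by lia.
  pose proof (qpoch_neq0 p p k Hp Hp). pose proof (qpoch_neq0 p p m Hp Hp).
  pose proof (qpoch_neq0 p p (k + m) Hp Hp). pose proof (qpoch_neq0 p p (N - k) Hp Hp).
  pose proof (qpoch_neq0 p p (N - (k + m)) Hp Hp).
  field. repeat split; auto.
Qed.

Lemma qpoch_add x p k d : qpoch x p (k + d) = qpoch x p k * qpoch (x * p ^ k) p d.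
Proof.
  induction d as [|d IH].
  - rewrite Nat.add_0_r. simpl. ring.
  - rewrite Nat.add_succ_r. simpl. rewrite IH, Cpow_add_r. ring.
Qed.

Lemma pow_square_add q k m :
  q ^ ((k + m) * (k + m)) = q ^ (k * k) * euler_coef (- q * (q ^ 2) ^ k) (q ^ 2) m.
Proof.
  induction m as [|m IH].
  - rewrite Nat.add_0_r. simpl. ring.
  - replace ((k + S m) * (k + S m))%nat with ((k + m) * (k + m) + (1 + 2 * k + 2 * m))%nat by lia.
    rewrite Cpow_add_r, IH. simpl euler_coef. rewrite !Cpow_add_r, !Cpow_mult_r. simpl. ring.
Qed.

Lemma Cmod_sqr_lt_1 q : (Cmod q < 1)%R -> (Cmod (q ^ 2) < 1)%R.
Proof. intros H. rewrite Cmod_pow. pose proof (Cmod_ge_0 q). simpl. nra. Qed.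

Lemma F_truncation_factor A q N : (Cmod q < 1)%R ->
  fsum (fun n => q ^ (n * n) * qbin (q ^ 2) N n * qpoch A (q ^ 2) n) (S N) =
  qpoch (- q) (q ^ 2) N *
  fsum (fun k => qbin (q ^ 2) N k * (q ^ (k * k) * euler_coef A (q ^ 2) k)
                 / qpoch (- q) (q ^ 2) k) (S N).
Proof.
  intros Hq. set (p := q ^ 2). assert (Hp : (Cmod p < 1)%R) by (apply Cmod_sqr_lt_1; auto).
  rewrite (fsum_ext _ (fun n => fsum (fun k =>
    q ^ (n * n) * qbin p N n * (qbin p n k * euler_coef A p k)) (S n))).
  2:{ intros n Hn. rewrite (qpoch_qbinomial A p n Hp), fsum_mull. reflexivity. }
  rewrite fsum_triangle, <- fsum_mull.
  apply fsum_ext. intros k Hk.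
  rewrite (fsum_ext _ (fun m => (q ^ (k * k) * qbin p N k * euler_coef A p k) *
    (qbin p (N - k) m * euler_coef (- q * p ^ k) p m))).
  2:{ intros m Hm. rewrite pow_square_add. fold p.
      transitivity (q ^ (k * k) * euler_coef (- q * p ^ k) p m * euler_coef A p k
                    * (qbin p N (k + m) * qbin p (k + m) k)); [ring|].
      rewrite qbin_mul by (auto; lia). ring. }
  rewrite fsum_mull, <- qpoch_qbinomial by auto.
  replace (qpoch (- q) p N) with (qpoch (- q) p (k + (N - k))) by (f_equal; lia).
  rewrite qpoch_add.
  assert (Hqk : qpoch (- q) p k <> 0) by (apply qpoch_neq0; rewrite ?Cmod_opp; auto).
  field. exact Hqk.
Qed.

Lemma ex_series_square_euler_coef A q : (Cmod q < 1)%R ->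
  ex_series (fun k => Cmod (q ^ (k * k) * euler_coef A (q ^ 2) k)).
Proof.
  intros Hq. pose proof (Cmod_ge_0 q).
  apply (ex_series_Cmod_ratio _ (Cmod A * Cmod q) (Cmod q ^ 4)).
  - apply Rmult_le_pos; apply Cmod_ge_0.
  - split; [apply pow_le; auto|]. simpl.
    assert (Cmod q * Cmod q < 1)%R by nra. assert (0 <= Cmod q * Cmod q)%R by nra. nra.
  - intros k. right.
    replace (S k * S k)%nat with (k * k + (1 + 2 * k))%nat by lia.
    change (euler_coef A (q ^ 2) (S k)) with (euler_coef A (q ^ 2) k * (- A * (q ^ 2) ^ k)).
    rewrite !Cpow_add_r, !Cmod_mult, Cmod_opp, !Cmod_pow, <- !pow_mult.
    replace (4 * k)%nat with (2 * k + 2 * k)%nat by lia. rewrite pow_add. ring.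
Qed.

Lemma F_truncation_lim A q : (Cmod q < 1)%R ->
  exists F, is_series (F_term A q) F /\
    Clim (fun N => fsum (fun n => q ^ (n * n) * qbin (q ^ 2) N n * qpoch A (q ^ 2) n) (S N)) F.
Proof.
  intros Hq. set (p := q ^ 2).
  assert (Hp : (Cmod p < 1)%R) by (apply Cmod_sqr_lt_1; auto).
  pose proof (Cmod_ge_0 q) as Hq0.
  destruct (qbin_bounded p Hp) as [B [HB0 HB]].
  destruct (qpoch_bounded A p Hp) as [U HU].
  apply (tannery _ _ (fun n => B * U * Cmod q ^ n)%R).
  - intros n. unfold F_term. fold p.
    apply (Clim_ext (fun N => (q ^ (n * n) * qpoch A p n) * qbin p N n)); [intros; ring|].
    replace (q ^ (n * n) * qpoch A p n / qpoch p p n)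
      with ((q ^ (n * n) * qpoch A p n) * / qpoch p p n) by (unfold Cdiv; ring).
    apply Clim_scal, qbin_lim; auto.
  - intros N n. rewrite !Cmod_mult, Cmod_pow.
    assert (Hsq : (Cmod q ^ (n * n) <= Cmod q ^ n)%R).
    { destruct n as [|n]; [simpl; lra|].
      replace (S n * S n)%nat with (S n + n * S n)%nat by lia. rewrite pow_add.
      rewrite <- (Rmult_1_r (Cmod q ^ S n)) at 2.
      apply Rmult_le_compat_l; [apply pow_le; lra|].
      rewrite <- (pow1 (n * S n)). apply pow_incr. lra. }
    pose proof (pow_le (Cmod q) (n * n) Hq0). pose proof (Cmod_ge_0 (qbin p N n)).
    pose proof (Cmod_ge_0 (qpoch A p n)). pose proof (HB N n). pose proof (HU n).
    replace (B * U * Cmod q ^ n)%R with (Cmod q ^ n * B * U)%R by ring.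
    apply Rmult_le_compat; auto; [apply Rmult_le_pos; auto|].
    apply Rmult_le_compat; auto.
  - apply (ex_series_scal_l (K:=R_AbsRing) (V:=R_NormedModule)).
    apply ex_series_geom. rewrite Rabs_pos_eq; auto.
Qed.

Definition G_term (A q : C) (k : nat) : C :=
  q ^ (k * k) * euler_coef A (q ^ 2) k / (qpoch (q ^ 2) (q ^ 2) k * qpoch (- q) (q ^ 2) k).

Lemma G_truncation_lim A q : (Cmod q < 1)%R ->
  exists G, is_series (G_term A q) G /\
    Clim (fun N => fsum (fun k => qbin (q ^ 2) N k * (q ^ (k * k) * euler_coef A (q ^ 2) k)
                                  / qpoch (- q) (q ^ 2) k) (S N)) G.
Proof.
  intros Hq. set (p := q ^ 2).
  assert (Hp : (Cmod p < 1)%R) by (apply Cmod_sqr_lt_1; auto).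
  assert (Hmq : (Cmod (- q) < 1)%R) by (rewrite Cmod_opp; auto).
  destruct (qbin_bounded p Hp) as [B [HB0 HB]].
  destruct (qpoch_bounded_below (- q) p Hmq Hp) as [c [Hc Hlow]].
  apply (tannery _ _ (fun k => B / c * Cmod (q ^ (k * k) * euler_coef A p k))%R).
  - intros k. unfold G_term. fold p.
    apply (Clim_ext (fun N => (q ^ (k * k) * euler_coef A p k / qpoch (- q) p k) * qbin p N k)).
    { intros; unfold Cdiv; ring. }
    replace (q ^ (k * k) * euler_coef A p k / (qpoch p p k * qpoch (- q) p k)) with
      ((q ^ (k * k) * euler_coef A p k / qpoch (- q) p k) * / qpoch p p k).
    2:{ pose proof (qpoch_neq0 p p k Hp Hp). pose proof (qpoch_neq0 (- q) p k Hmq Hp).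
        field. auto. }
    apply Clim_scal, qbin_lim; auto.
  - intros N k. rewrite Cmod_div by (apply qpoch_neq0; auto). rewrite Cmod_mult.
    pose proof (HB N k). pose proof (Hlow k). unfold Rdiv.
    replace (B * / c * Cmod (q ^ (k * k) * euler_coef A p k))%R
      with (B * Cmod (q ^ (k * k) * euler_coef A p k) * / c)%R by ring.
    apply Rmult_le_compat.
    + apply Rmult_le_pos; apply Cmod_ge_0.
    + apply Rlt_le, Rinv_0_lt_compat. lra.
    + apply Rmult_le_compat_r; [apply Cmod_ge_0 | auto].
    + apply Rinv_le_contravar; auto.
  - apply (ex_series_scal_l (K:=R_AbsRing) (V:=R_NormedModule)).
    apply ex_series_square_euler_coef; auto.
Qed.

Lemma F_eq_qpoch_mul_G A q : (Cmod q < 1)%R ->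
  exists F P G, is_series (F_term A q) F /\ Clim (qpoch (- q) (q ^ 2)) P /\
    is_series (G_term A q) G /\ F = P * G.
Proof.
  intros Hq.
  destruct (F_truncation_lim A q Hq) as [F [HF HlimF]].
  destruct (G_truncation_lim A q Hq) as [G [HG HlimG]].
  destruct (qpoch_euler (- q) (q ^ 2) (Cmod_sqr_lt_1 q Hq)) as [P [HP _]].
  exists F, P, G. repeat split; auto.
  apply (Clim_unique _ _ _ HlimF).
  apply (Clim_ext (fun N => qpoch (- q) (q ^ 2) N *
    fsum (fun k => qbin (q ^ 2) N k * (q ^ (k * k) * euler_coef A (q ^ 2) k)
                   / qpoch (- q) (q ^ 2) k) (S N))).
  { intros N. rewrite F_truncation_factor by auto. reflexivity. }
  apply Clim_mult; auto.
Qed.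

Lemma euler_coef_opp x p k : euler_coef (- x) p k = (-1) ^ k * euler_coef x p k.
Proof. induction k as [|k IH]; simpl; [ring | rewrite IH; ring]. Qed.

Lemma Cpow_opp_double x j : (- x) ^ (2 * j) = (x ^ 2) ^ j.
Proof. rewrite Cpow_mult_r. f_equal. simpl. ring. Qed.

Lemma euler_coef_opp_base_double s q j :
  euler_coef s (- q) (2 * j) = q ^ (j * j) * euler_coef (s * s) (q ^ 2) j.
Proof.
  induction j as [|j IH].
  - simpl. ring.
  - replace (2 * S j)%nat with (S (S (2 * j))) by lia.
    replace (S j * S j)%nat with (S (2 * j + j * j)) by lia.
    cbn [euler_coef].
    rewrite IH, (Cpow_S (- q) (2 * j)), Cpow_opp_double, (Cpow_S q (2 * j + j * j)),
      (Cpow_add_r q (2 * j)), (Cpow_mult_r q 2 j).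
    ring.
Qed.

Lemma qpoch_opp_double q j :
  qpoch (- q) (- q) (2 * j) = qpoch (q ^ 2) (q ^ 2) j * qpoch (- q) (q ^ 2) j.
Proof.
  induction j as [|j IH].
  - simpl. ring.
  - replace (2 * S j)%nat with (S (S (2 * j))) by lia.
    cbn [qpoch]. rewrite IH, (Cpow_S (- q) (2 * j)), Cpow_opp_double. ring.
Qed.

Lemma fsum_euler_pair_double s q J : (Cmod q < 1)%R ->
  fsum (fun k => euler_coef (- s) (- q) k / qpoch (- q) (- q) k
                 + euler_coef s (- q) k / qpoch (- q) (- q) k) (2 * J) =
  2 * fsum (G_term (s * s) q) J.
Proof.
  intros Hq.
  assert (Hq2 : (Cmod (q ^ 2) < 1)%R) by (apply Cmod_sqr_lt_1; auto).
  assert (Hmq : (Cmod (- q) < 1)%R) by (rewrite Cmod_opp; auto).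
  induction J as [|J IH].
  - simpl. ring.
  - replace (2 * S J)%nat with (S (S (2 * J))) by lia. cbn [fsum]. rewrite IH.
    rewrite !euler_coef_opp, Cpow_S, Cpow_mult_r.
    replace ((-1) ^ 2) with (RtoC 1) by (simpl; ring).
    rewrite Cpow_1_l, euler_coef_opp_base_double, qpoch_opp_double. unfold G_term.
    pose proof (qpoch_neq0 (q ^ 2) (q ^ 2) J Hq2 Hq2). pose proof (qpoch_neq0 (- q) (q ^ 2) J Hmq Hq2).
    pose proof (qpoch_neq0 (- q) (- q) (S (2 * J)) Hmq Hmq).
    field. auto.
Qed.

Lemma euler_pair_sum s q G : (Cmod q < 1)%R -> is_series (G_term (s * s) q) G ->
  exists P2 P3, Clim (qpoch (- s) (- q)) P2 /\ Clim (qpoch s (- q)) P3 /\ P2 + P3 = 2 * G.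
Proof.
  intros Hq HG.
  assert (Hmq : (Cmod (- q) < 1)%R) by (rewrite Cmod_opp; auto).
  destruct (qpoch_euler (- s) (- q) Hmq) as [P2 [HP2 HS2]].
  destruct (qpoch_euler s (- q) Hmq) as [P3 [HP3 HS3]].
  exists P2, P3. split; [exact HP2|]. split; [exact HP3|].
  apply is_series_Clim in HS2, HS3, HG.
  pose proof (Clim_plus _ _ _ _ HS2 HS3) as H23.
  apply (Clim_ext _ (fsum (fun k => euler_coef (- s) (- q) k / qpoch (- q) (- q) k
                                    + euler_coef s (- q) k / qpoch (- q) (- q) k))) in H23.
  2:{ intros n. rewrite fsum_plus. reflexivity. }
  apply (Clim_reindex _ _ (fun J => 2 * J)%nat) in H23.
  2:{ intros M. exists M. intros. lia. }
  apply (Clim_unique _ _ _ H23).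
  apply (Clim_ext (fun J => 2 * fsum (G_term (s * s) q) J)).
  { intros J. rewrite fsum_euler_pair_double by auto. reflexivity. }
  apply Clim_scal. exact HG.
Qed.

Theorem lemma3p2 (A q sA : C) (hsA : sA * sA = A) (hq : (Cmod q < 1)%R) :
  exists (F P1 P2 P3 : C),
    is_series (F_term A q) F /\
    is_qpoch_inf (- q) (q ^ 2) P1 /\
    is_qpoch_inf (- sA) (- q) P2 /\
    is_qpoch_inf sA (- q) P3 /\
    F = / 2 * P1 * (P2 + P3).
Proof.
  destruct (F_eq_qpoch_mul_G A q hq) as [F [P1 [G [HF [HP1 [HG EF]]]]]].
  rewrite <- hsA in HG.
  destruct (euler_pair_sum sA q G hq HG) as [P2 [P3 [HP2 [HP3 E23]]]].
  exists F, P1, P2, P3. unfold is_qpoch_inf. rewrite <- !Clim_filterlim.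
  repeat split; auto.
  rewrite EF, E23. field.
Qed.
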